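(* Let $x,y\in\mathbb{B}^2\setminus\{0\}$ with $|x|=|y|$. (1) If $|x+y|\le \frac{4|x|^2}{1+|x|^2}$, then $$\tilde\tau_{\mathbb{B}^2}(x,y)=\log\Big(1+\sqrt{\tfrac{2|x|\,|x-y|}{1-|x|^2}}\Big).$$ (2) If $|x+y|> \frac{4|x|^2}{1+|x|^2}$, then $$\tilde\tau_{\mathbb{B}^2}(x,y)=\log\Big(1+\tfrac{|x-y|}{\sqrt{1+|x|^2-|x+y|}}\Big).$$
   Context: $\mathbb{B}^n=\{z\in\mathbb{R}^n:|z|<1\}$ is the open unit ball. For a proper subdomain $D\subsetneq\mathbb{R}^n$ with nonempty boundary $\partial D$ and $x,y\in D$, the scale invariant Cassinian metric is $$\tilde\tau_D(x,y)=\log\Big(1+\sup_{p\in\partial D}\frac{|x-y|}{\sqrt{|x-p|\,|y-p|}}\Big).$$ *)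

From Stdlib Require Import Reals Lra Classical ClassicalEpsilon.
Open Scope R_scope.

Definition pt := (R * R)%type.

Definition padd (x y : pt) : pt := (fst x + fst y, snd x + snd y).
Definition psub (x y : pt) : pt := (fst x - fst y, snd x - snd y).
Definition norm (x : pt) : R := sqrt (fst x * fst x + snd x * snd x).
Definition origin : pt := (0, 0).

Definition ball2 (z : pt) : Prop := norm z < 1.

Definition boundary (D : pt -> Prop) (p : pt) : Prop :=
  forall eps, 0 < eps ->
    (exists q, D q /\ norm (psub q p) < eps) /\
    (exists q, ~ D q /\ norm (psub q p) < eps).

(* Supremum of a set of reals (least upper bound), chosen classically;
   it is the genuine supremum whenever the set is nonempty and bounded above. *)
Definition supR (E : R -> Prop) : R :=
  epsilon (inhabits 0) (fun s => is_lub E s).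

Definition cass_set (D : pt -> Prop) (x y : pt) (t : R) : Prop :=
  exists p, boundary D p /\
    t = norm (psub x y) / sqrt (norm (psub x p) * norm (psub y p)).

Definition tilde_tau (D : pt -> Prop) (x y : pt) : R :=
  ln (1 + supR (cass_set D x y)).

From Stdlib Require Import Reals Lra ClassicalEpsilon.
Open Scope R_scope.

(* Let r = |x| = |y| in (0,1), s = |x+y|, t = |x-y|.  The boundary of the disk
   is the unit circle, so tau~ = ln (1 + t / sqrt m), where m is the minimum of
   P(p) = |x-p| |y-p| over |p| = 1 (lemma [tilde_tau_of_min_prod]).  Writing
   sigma = (x+y).p and delta = (x-y).p, one has
     P(p)^2 = (1 + r^2 - sigma)^2 - delta^2                  [cass_prod_sq],
   and since x+y is orthogonal to x-y, (sigma, delta) lies on the ellipse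
     t^2 sigma^2 + s^2 delta^2 = s^2 t^2                    [ellipse_constraint].
   Eliminating delta leaves a convex quadratic in sigma on [-s, s] whose critical
   point is sigma* = s^2 (1 + r^2) / (4 r^2).  If sigma* <= s the minimum is
   m = t (1 - r^2) / (2 r) (case 1), otherwise it is reached at sigma = s and
   m = 1 + r^2 - s (case 2). *)

Definition dot (z w : pt) : R := fst z * fst w + snd z * snd w.

Lemma norm_ge0 z : 0 <= norm z.
Proof. apply sqrt_pos. Qed.

Lemma norm_sq z : norm z ^ 2 = dot z z.
Proof. apply pow2_sqrt. unfold dot. nra. Qed.

Lemma unit_dot p : norm p = 1 -> dot p p = 1.
Proof. intros Hp. rewrite <- norm_sq, Hp. ring. Qed.

Lemma nonneg_sq_le a b : 0 <= b -> a ^ 2 <= b ^ 2 -> a <= b.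
Proof. intros. nra. Qed.

Lemma nonneg_sq_eq a b : 0 <= a -> 0 <= b -> a ^ 2 = b ^ 2 -> a = b.
Proof. intros. nra. Qed.

(* Lagrange's identity in dimension two gives the Cauchy-Schwarz inequality. *)
Lemma cauchy_schwarz z w : dot z w ^ 2 <= dot z z * dot w w.
Proof.
  unfold dot. pose proof (pow2_ge_0 (fst z * snd w - snd z * fst w)). nra.
Qed.

Lemma dot_sq_le (z p : pt) : norm p = 1 -> dot z p ^ 2 <= norm z ^ 2.
Proof.
  intros Hp. rewrite norm_sq, <- (Rmult_1_r (dot z z)), <- (unit_dot p Hp).
  apply cauchy_schwarz.
Qed.

Lemma dot_le_norm z w : dot z w <= norm z * norm w.
Proof.
  apply nonneg_sq_le.
  - apply Rmult_le_pos; apply norm_ge0.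
  - rewrite Rpow_mult_distr, !norm_sq. apply cauchy_schwarz.
Qed.

Lemma norm_triangle z w : norm (padd z w) <= norm z + norm w.
Proof.
  apply nonneg_sq_le.
  - pose proof (norm_ge0 z). pose proof (norm_ge0 w). lra.
  - pose proof (dot_le_norm z w).
    replace ((norm z + norm w) ^ 2) with (norm z ^ 2 + 2 * (norm z * norm w) + norm w ^ 2) by ring.
    rewrite !norm_sq. unfold dot, padd in *; simpl. nra.
Qed.

Lemma norm_sub_triangle z w : norm z <= norm (psub z w) + norm w.
Proof.
  replace z with (padd (psub z w) w) at 1
    by (destruct z, w; unfold padd, psub; simpl; f_equal; ring).
  apply norm_triangle.
Qed.

Lemma norm_psub_sym z w : norm (psub z w) = norm (psub w z).
Proof. destruct z, w. unfold norm, psub; simpl. f_equal. ring. Qed.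

Lemma norm_pos (z : pt) : z <> origin -> 0 < norm z.
Proof.
  intros Hz. destruct (Rle_lt_or_eq_dec 0 (norm z) (norm_ge0 z)) as [Hpos | H0]; [exact Hpos |].
  exfalso. apply Hz. pose proof (norm_sq z) as Hsq. rewrite <- H0 in Hsq.
  destruct z as [a b]. unfold dot in Hsq; simpl in Hsq.
  unfold origin. f_equal; nra.
Qed.

(* Radial scaling, used to approach a point of the unit circle from inside and outside. *)
Definition scale (k : R) (z : pt) : pt := (k * fst z, k * snd z).

Lemma norm_scale k z : norm (scale k z) = Rabs k * norm z.
Proof.
  unfold norm, scale; simpl.
  replace (k * fst z * (k * fst z) + k * snd z * (k * snd z))
    with ((k * k) * (fst z * fst z + snd z * snd z)) by ring.
  rewrite sqrt_mult by nra. f_equal. apply sqrt_Rsqr_abs.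
Qed.

Lemma psub_scale k p : psub (scale k p) p = scale (k - 1) p.
Proof. destruct p. unfold psub, scale; simpl. f_equal; ring. Qed.

Lemma boundary_ball2 p : boundary ball2 p <-> norm p = 1.
Proof.
  split.
  - intros Hb. destruct (Rtotal_order (norm p) 1) as [Hlt | [Heq | Hgt]]; [exfalso | exact Heq | exfalso].
    + destruct (Hb (1 - norm p)) as [_ [q [Hq Hqp]]]; [lra |].
      apply Hq. unfold ball2. pose proof (norm_sub_triangle q p). lra.
    + destruct (Hb (norm p - 1)) as [[q [Hq Hqp]] _]; [lra |].
      unfold ball2 in Hq. pose proof (norm_sub_triangle p q).
      rewrite norm_psub_sym in Hqp. lra.
  - intros Hp eps Heps.
    set (l := Rmin (eps / 2) (1 / 2)).
    assert (0 < l) by (apply Rmin_glb_lt; lra).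
    assert (l <= eps / 2) by apply Rmin_l.
    assert (l <= 1 / 2) by apply Rmin_r.
    split; [exists (scale (1 - l) p) | exists (scale (1 + l) p)];
      unfold ball2; rewrite psub_scale, !norm_scale, Hp; split.
    + rewrite Rabs_right; lra.
    + rewrite Rabs_left; lra.
    + rewrite Rabs_right; lra.
    + rewrite Rabs_right; lra.
Qed.

(* In two dimensions, if S is orthogonal to D, the projections of a unit vector p
   satisfy |D|^2 (S.p)^2 + |S|^2 (D.p)^2 = |S|^2 |D|^2 (Parseval in an orthogonal frame). *)
Lemma orthogonal_decomposition (S D p : pt) :
  dot S D = 0 -> dot p p = 1 ->
  dot D D * dot S p ^ 2 + dot S S * dot D p ^ 2 = dot S S * dot D D.
Proof.
  intros HSD Hp.
  assert (Hid : dot D D * dot S p ^ 2 + dot S S * dot D p ^ 2 =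
     (dot S S * dot D D - dot S D ^ 2) * dot p p + 2 * dot S D * dot S p * dot D p)
    by (unfold dot; ring).
  rewrite Hid, HSD, Hp. ring.
Qed.

Lemma unit_with_dot (z : pt) (c : R) :
  0 < norm z -> c ^ 2 <= norm z ^ 2 -> exists p, norm p = 1 /\ dot z p = c.
Proof.
  intros Hz Hc. rewrite norm_sq in Hc.
  assert (Hzz : 0 < dot z z) by (rewrite <- norm_sq; nra).
  set (w := sqrt (dot z z - c ^ 2)).
  assert (Hw : w ^ 2 = dot z z - c ^ 2) by (apply pow2_sqrt; lra).
  exists ((c * fst z - w * snd z) / dot z z, (c * snd z + w * fst z) / dot z z).
  unfold norm, dot in *; simpl in *. split.
  - rewrite <- sqrt_1. f_equal. field_simplify_eq; [| lra]. nra.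
  - field_simplify_eq; [| lra]. ring.
Qed.

Lemma supR_max (E : R -> Prop) (m : R) :
  E m -> (forall z, E z -> z <= m) -> supR E = m.
Proof.
  intros Hm Hub.
  assert (Hlub : is_lub E m) by (split; [exact Hub | intros b Hb; exact (Hb m Hm)]).
  unfold supR.
  destruct (epsilon_spec (inhabits 0) (fun s => is_lub E s) (ex_intro _ m Hlub))
    as [Hs_ub Hs_least].
  apply Rle_antisym; [apply Hs_least; exact Hub | apply Hlub; exact Hs_ub].
Qed.

Definition cass_prod (x y p : pt) : R := norm (psub x p) * norm (psub y p).

Lemma cass_prod_ge0 (x y p : pt) : 0 <= cass_prod x y p.
Proof. apply Rmult_le_pos; apply norm_ge0. Qed.

Lemma tilde_tau_of_min_prod (D : pt -> Prop) (x y : pt) (L : R) :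
  0 < L ->
  (forall p, boundary D p -> L <= cass_prod x y p) ->
  (exists p, boundary D p /\ cass_prod x y p = L) ->
  tilde_tau D x y = ln (1 + norm (psub x y) / sqrt L).
Proof.
  intros HL Hlow [p0 [Hp0 HP0]].
  unfold tilde_tau. do 2 f_equal. apply supR_max.
  - exists p0. split; [exact Hp0 | fold (cass_prod x y p0); rewrite HP0; reflexivity].
  - intros z [p [Hp ->]]. fold (cass_prod x y p).
    pose proof (Hlow p Hp) as HLp.
    unfold Rdiv. apply Rmult_le_compat_l; [apply sqrt_pos |].
    apply Rinv_le_contravar; [apply sqrt_lt_R0; exact HL | apply sqrt_le_1_alt; exact HLp].
Qed.

(* With r2 = r^2, s2 = s^2, t2 = t^2 and (sg, dl) on the
   ellipse t2 sg^2 + s2 dl^2 = s2 t2, the quantity (1 + r2 - sg)^2 - dl^2 exceeds its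
   interior minimum t2 (1 - r2)^2 / (4 r2) by a perfect square. *)
Lemma interior_min_identity (r2 s2 t2 sg dl : R) :
  s2 + t2 = 4 * r2 -> t2 * sg ^ 2 + s2 * dl ^ 2 = s2 * t2 ->
  4 * r2 * s2 * ((1 + r2 - sg) ^ 2 - dl ^ 2) - s2 * t2 * (1 - r2) ^ 2
  = (4 * r2 * sg - s2 * (1 + r2)) ^ 2.
Proof.
  intros Hst Hell.
  replace t2 with (4 * r2 - s2) in * by lra.
  replace (4 * r2 * s2 * ((1 + r2 - sg) ^ 2 - dl ^ 2))
    with (4 * r2 * s2 * (1 + r2 - sg) ^ 2 - 4 * r2 * (s2 * dl ^ 2)) by ring.
  replace (s2 * dl ^ 2) with (s2 * (4 * r2 - s2) - (4 * r2 - s2) * sg ^ 2) by lra.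
  ring.
Qed.

Lemma interior_lower_bound (r2 s2 t2 sg dl : R) :
  0 < r2 -> 0 <= s2 -> s2 + t2 = 4 * r2 -> t2 * sg ^ 2 + s2 * dl ^ 2 = s2 * t2 ->
  sg ^ 2 <= s2 -> dl ^ 2 <= t2 ->
  t2 * (1 - r2) ^ 2 / (4 * r2) <= (1 + r2 - sg) ^ 2 - dl ^ 2.
Proof.
  intros Hr Hs Hst Hell Hsg Hdl.
  destruct (Req_dec s2 0) as [Hs0 | Hs0].
  - subst s2. replace sg with 0 by nra. replace t2 with (4 * r2) by lra.
    replace (4 * r2 * (1 - r2) ^ 2 / (4 * r2)) with ((1 - r2) ^ 2) by (field; lra).
    nra.
  - pose proof (interior_min_identity r2 s2 t2 sg dl Hst Hell) as Hid.
    pose proof (pow2_ge_0 (4 * r2 * sg - s2 * (1 + r2))).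
    apply Rmult_le_reg_r with (4 * r2 * s2); [nra |].
    replace (t2 * (1 - r2) ^ 2 / (4 * r2) * (4 * r2 * s2))
      with (s2 * t2 * (1 - r2) ^ 2) by (field; lra).
    lra.
Qed.

(* Compared with its value at the endpoint sg = s, the quantity differs by a product
   that is nonnegative as soon as the critical point lies beyond s. *)
Lemma endpoint_min_identity (r2 s t2 sg dl : R) :
  s ^ 2 + t2 = 4 * r2 -> t2 * sg ^ 2 + s ^ 2 * dl ^ 2 = s ^ 2 * t2 ->
  s ^ 2 * (((1 + r2 - sg) ^ 2 - dl ^ 2) - (1 + r2 - s) ^ 2)
  = (sg - s) * (4 * r2 * sg - 2 * s ^ 2 * (1 + r2) + 4 * r2 * s).
Proof.
  intros Hst Hell.
  replace t2 with (4 * r2 - s ^ 2) in * by lra.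
  replace (s ^ 2 * (((1 + r2 - sg) ^ 2 - dl ^ 2) - (1 + r2 - s) ^ 2))
    with (s ^ 2 * ((1 + r2 - sg) ^ 2 - (1 + r2 - s) ^ 2) - s ^ 2 * dl ^ 2) by ring.
  replace (s ^ 2 * dl ^ 2) with (s ^ 2 * (4 * r2 - s ^ 2) - (4 * r2 - s ^ 2) * sg ^ 2) by lra.
  ring.
Qed.

Lemma endpoint_lower_bound (r2 s t2 sg dl : R) :
  0 < r2 -> 0 <= s -> s ^ 2 + t2 = 4 * r2 -> t2 * sg ^ 2 + s ^ 2 * dl ^ 2 = s ^ 2 * t2 ->
  sg ^ 2 <= s ^ 2 -> 4 * r2 < s * (1 + r2) ->
  (1 + r2 - s) ^ 2 <= (1 + r2 - sg) ^ 2 - dl ^ 2.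
Proof.
  intros Hr Hs Hst Hell Hsg Hthr.
  pose proof (endpoint_min_identity r2 s t2 sg dl Hst Hell) as Hid.
  assert (sg <= s) by nra.
  assert (4 * r2 * sg - 2 * s ^ 2 * (1 + r2) + 4 * r2 * s < 0) by nra.
  assert (0 < s ^ 2) by nra.
  nra.
Qed.

Lemma le_div_mul (a b c : R) : 0 < c -> a <= b / c -> a * c <= b.
Proof.
  intros Hc H. replace b with (b / c * c) by (field; lra).
  apply Rmult_le_compat_r; lra.
Qed.

Lemma div_lt_mul (a b c : R) : 0 < c -> b / c < a -> b < a * c.
Proof.
  intros Hc H. replace b with (b / c * c) by (field; lra).
  apply Rmult_lt_compat_r; lra.
Qed.

Section EqualNormPair.

Variables x y : pt.
Hypothesis Hxy : norm x = norm y.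

Local Notation r := (norm x).
Local Notation s := (norm (padd x y)).
Local Notation t := (norm (psub x y)).
Local Notation sigma p := (dot (padd x y) p).
Local Notation delta p := (dot (psub x y) p).

Lemma cass_prod_sq (p : pt) :
  norm p = 1 -> cass_prod x y p ^ 2 = (1 + r ^ 2 - sigma p) ^ 2 - delta p ^ 2.
Proof.
  intros Hp. pose proof (unit_dot p Hp) as Hpp.
  pose proof (norm_sq x) as Hx. pose proof (norm_sq y) as Hy. rewrite <- Hxy in Hy.
  unfold cass_prod. rewrite Rpow_mult_distr, (norm_sq (psub x p)), (norm_sq (psub y p)).
  replace (dot (psub x p) (psub x p)) with (1 + r ^ 2 - 2 * dot x p)
    by (unfold dot, psub in *; simpl in *; nra).
  replace (dot (psub y p) (psub y p)) with (1 + r ^ 2 - 2 * dot y p)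
    by (unfold dot, psub in *; simpl in *; nra).
  unfold dot, padd, psub; simpl. ring.
Qed.

Lemma parallelogram : s ^ 2 + t ^ 2 = 4 * r ^ 2.
Proof.
  pose proof (norm_sq x) as Hx. pose proof (norm_sq y) as Hy. rewrite <- Hxy in Hy.
  rewrite !norm_sq. unfold dot, padd, psub in *; simpl in *. nra.
Qed.

Lemma diagonals_orthogonal : dot (padd x y) (psub x y) = 0.
Proof.
  pose proof (norm_sq x) as Hx. pose proof (norm_sq y) as Hy. rewrite <- Hxy in Hy.
  unfold dot, padd, psub in *; simpl in *. nra.
Qed.

Lemma ellipse_constraint (p : pt) :
  norm p = 1 -> t ^ 2 * sigma p ^ 2 + s ^ 2 * delta p ^ 2 = s ^ 2 * t ^ 2.
Proof.
  intros Hp. rewrite !norm_sq.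
  apply orthogonal_decomposition; [exact diagonals_orthogonal | exact (unit_dot p Hp)].
Qed.

Hypothesis Hr0 : 0 < r.
Hypothesis Hr1 : r < 1.

(* In case 1 the points are distinct: x = y would give s = 2r, violating the threshold. *)
Lemma interior_dist_pos : s * (1 + r ^ 2) <= 4 * r ^ 2 -> 0 < t.
Proof.
  intros Hthr. destruct (Rle_lt_or_eq_dec 0 t (norm_ge0 _)) as [Ht | Ht]; [exact Ht | exfalso].
  pose proof parallelogram as Hst. rewrite <- Ht in Hst.
  assert (Hs : s = 2 * r) by (apply nonneg_sq_eq; [apply norm_ge0 | lra | lra]).
  rewrite Hs in Hthr. pose proof (pow_lt (1 - r) 2 ltac:(lra)). nra.
Qed.

(* The case-2 minimum is positive, since s <= 2r. *)
Lemma endpoint_min_pos : 0 < 1 + r ^ 2 - s.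
Proof.
  assert (Hs2r : s <= 2 * r).
  { apply nonneg_sq_le; [lra |]. pose proof parallelogram. pose proof (pow2_ge_0 t). nra. }
  pose proof (pow_lt (1 - r) 2 ltac:(lra)). nra.
Qed.

Lemma interior_lower (p : pt) :
  norm p = 1 -> t * (1 - r ^ 2) / (2 * r) <= cass_prod x y p.
Proof.
  intros Hp. apply nonneg_sq_le; [apply cass_prod_ge0 |].
  rewrite cass_prod_sq by exact Hp.
  replace ((t * (1 - r ^ 2) / (2 * r)) ^ 2)
    with (t ^ 2 * (1 - r ^ 2) ^ 2 / (4 * r ^ 2)) by (field; lra).
  apply (interior_lower_bound _ (s ^ 2)).
  - nra.
  - apply pow2_ge_0.
  - apply parallelogram.
  - apply ellipse_constraint, Hp.
  - apply dot_sq_le, Hp.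
  - apply dot_sq_le, Hp.
Qed.

(* ... and is attained, at the unit vector whose projection on x+y is sigma*. *)
Lemma interior_attained :
  s * (1 + r ^ 2) <= 4 * r ^ 2 ->
  exists p, norm p = 1 /\ cass_prod x y p = t * (1 - r ^ 2) / (2 * r).
Proof.
  intros Hthr. pose proof parallelogram as Hst.
  assert (Hmin0 : 0 <= t * (1 - r ^ 2) / (2 * r)).
  { apply Rmult_le_pos; [apply Rmult_le_pos; [apply norm_ge0 | nra] | left; apply Rinv_0_lt_compat; lra]. }
  destruct (Req_dec s 0) as [Hs0 | Hs0].
  - (* x + y = 0: sigma vanishes, so take p along x - y to make delta^2 maximal. *)
    assert (Ht : t = 2 * r).
    { apply nonneg_sq_eq; [apply norm_ge0 | lra |]. rewrite Hs0 in Hst. lra. }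
    destruct (unit_with_dot (psub x y) t ltac:(lra) (Rle_refl _)) as [p [Hp Hdel]].
    assert (Hsig : sigma p = 0).
    { pose proof (dot_sq_le (padd x y) p Hp) as Hle. rewrite Hs0 in Hle. nra. }
    exists p. split; [exact Hp |].
    apply nonneg_sq_eq; [apply cass_prod_ge0 | exact Hmin0 |].
    rewrite cass_prod_sq, Hsig, Hdel, Ht by exact Hp. field. lra.
  - (* s > 0: take p with sigma equal to the critical value c, admissible since c <= s. *)
    assert (Hs : 0 < s) by (pose proof (norm_ge0 (padd x y)); lra).
    set (c := s ^ 2 * (1 + r ^ 2) / (4 * r ^ 2)).
    assert (Hc0 : 0 <= c).
    { apply Rmult_le_pos; [nra | left; apply Rinv_0_lt_compat; nra]. }
    assert (Hcs : c <= s).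
    { unfold c. apply Rmult_le_reg_r with (4 * r ^ 2); [nra |].
      replace (s ^ 2 * (1 + r ^ 2) / (4 * r ^ 2) * (4 * r ^ 2))
        with (s * (s * (1 + r ^ 2))) by (field; lra).
      apply Rmult_le_compat_l; lra. }
    destruct (unit_with_dot (padd x y) c Hs ltac:(nra)) as [p [Hp Hsig]].
    exists p. split; [exact Hp |].
    apply nonneg_sq_eq; [apply cass_prod_ge0 | exact Hmin0 |].
    pose proof (interior_min_identity (r ^ 2) (s ^ 2) (t ^ 2) (sigma p) (delta p)
                  Hst (ellipse_constraint p Hp)) as Hid.
    assert (Hcrit : 4 * r ^ 2 * c - s ^ 2 * (1 + r ^ 2) = 0) by (unfold c; field; lra).
    rewrite Hsig, Hcrit in Hid.
    rewrite cass_prod_sq, Hsig by exact Hp.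
    assert (Hr2 : 0 < r ^ 2) by (apply pow_lt; lra).
    assert (Hs2 : 0 < s ^ 2) by (apply pow_lt; lra).
    apply (Rmult_eq_reg_l (4 * r ^ 2 * s ^ 2)); [| apply Rgt_not_eq, Rmult_lt_0_compat; lra].
    replace (4 * r ^ 2 * s ^ 2 * (t * (1 - r ^ 2) / (2 * r)) ^ 2)
      with (s ^ 2 * t ^ 2 * (1 - r ^ 2) ^ 2) by (field; lra).
    lra.
Qed.

Lemma endpoint_lower (p : pt) :
  4 * r ^ 2 < s * (1 + r ^ 2) -> norm p = 1 -> 1 + r ^ 2 - s <= cass_prod x y p.
Proof.
  intros Hthr Hp. apply nonneg_sq_le; [apply cass_prod_ge0 |].
  rewrite cass_prod_sq by exact Hp.
  apply (endpoint_lower_bound _ _ (t ^ 2)).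
  - nra.
  - apply norm_ge0.
  - apply parallelogram.
  - apply ellipse_constraint, Hp.
  - apply dot_sq_le, Hp.
  - exact Hthr.
Qed.

(* ... and is attained at the unit vector in the direction of x+y. *)
Lemma endpoint_attained :
  4 * r ^ 2 < s * (1 + r ^ 2) -> exists p, norm p = 1 /\ cass_prod x y p = 1 + r ^ 2 - s.
Proof.
  intros Hthr.
  assert (Hs : 0 < s) by nra.
  destruct (unit_with_dot (padd x y) s Hs (Rle_refl _)) as [p [Hp Hsig]].
  exists p. split; [exact Hp |].
  apply nonneg_sq_eq; [apply cass_prod_ge0 | left; exact endpoint_min_pos |].
  pose proof (ellipse_constraint p Hp) as Hell. rewrite Hsig in Hell.
  assert (Hdel : delta p ^ 2 = 0).
  { apply (Rmult_eq_reg_l (s ^ 2)); [rewrite Rmult_0_r; lra | apply pow_nonzero; lra]. }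
  rewrite cass_prod_sq, Hsig, Hdel by exact Hp. ring.
Qed.

End EqualNormPair.

Lemma interior_value (r t : R) :
  0 < r < 1 -> 0 < t -> t / sqrt (t * (1 - r ^ 2) / (2 * r)) = sqrt (2 * r * t / (1 - r ^ 2)).
Proof.
  intros Hr Ht.
  assert (Hpos : 0 < t * (1 - r ^ 2) / (2 * r)).
  { apply Rdiv_lt_0_compat; [apply Rmult_lt_0_compat; nra | lra]. }
  rewrite <- (sqrt_square t) at 1 by lra. rewrite <- sqrt_div_alt by exact Hpos.
  f_equal. field. split; nra.
Qed.

Theorem lemma3p2 (x y : pt) :
  ball2 x -> ball2 y -> x <> origin -> y <> origin -> norm x = norm y ->
  (norm (padd x y) <= 4 * norm x ^ 2 / (1 + norm x ^ 2) ->
     tilde_tau ball2 x y =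
     ln (1 + sqrt (2 * norm x * norm (psub x y) / (1 - norm x ^ 2)))) /\
  (norm (padd x y) > 4 * norm x ^ 2 / (1 + norm x ^ 2) ->
     tilde_tau ball2 x y =
     ln (1 + norm (psub x y) / sqrt (1 + norm x ^ 2 - norm (padd x y)))).
Proof.
  intros Hr1 _ Hx0 _ Hxy. unfold ball2 in Hr1.
  pose proof (norm_pos x Hx0) as Hr0.
  assert (Hden : 0 < 1 + norm x ^ 2) by nra.
  split; intros Hthr.
  - apply le_div_mul in Hthr; [| exact Hden].
    pose proof (interior_dist_pos x y Hxy Hr0 Hr1 Hthr) as Ht.
    rewrite <- interior_value by (lra || exact (conj Hr0 Hr1)).
    apply tilde_tau_of_min_prod.
    + apply Rdiv_lt_0_compat; [apply Rmult_lt_0_compat; nra | lra].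
    + intros p Hp. apply (interior_lower x y Hxy Hr0). apply boundary_ball2, Hp.
    + destruct (interior_attained x y Hxy Hr0 Hr1 Hthr) as [p [Hp HP]].
      exists p. split; [apply boundary_ball2, Hp | exact HP].
  - apply div_lt_mul in Hthr; [| exact Hden].
    apply tilde_tau_of_min_prod.
    + apply (endpoint_min_pos x y Hxy Hr0 Hr1).
    + intros p Hp. apply (endpoint_lower x y Hxy Hr0 p Hthr). apply boundary_ball2, Hp.
    + destruct (endpoint_attained x y Hxy Hr0 Hr1 Hthr) as [p [Hp HP]].
      exists p. split; [apply boundary_ball2, Hp | exact HP].
Qed.
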